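(* Let $\mathcal{V}$ be a finite non-trivial quantale, and let $\mathsf{F}\colon\mathbf{Cat}(\mathcal{V})_{\mathrm{sym}}\to\mathbf{Cat}(\mathcal{V})_{\mathrm{sym}}$ be a lifting of a finitary functor $\mathsf{G}\colon\mathbf{Set}\to\mathbf{Set}$ such that $\mathsf{F}$ preserves initial morphisms. Then there is a set $\Lambda$ of predicate liftings for $\mathsf{F}$ of finite arity such that the coalgebraic logic $\mathcal{L}(\Lambda)$ is expressive, i.e. $ld^\Lambda_\alpha\le bd^{\mathsf{F}}_\alpha$ (pointwise in $\mathcal{V}$) for every $\mathsf{F}$-coalgebra $(X,a,\alpha)$.
   Context: A quantale $(\mathcal{V},\otimes,k)$ is a complete lattice with commutative monoid structure, each $u\otimes-$ preserving joins, $\hom(u,-)$ its right adjoint. Symmetric $\mathcal{V}$-categories $(X,a)$: $a\colon X\times X\to\mathcal{V}$ with $k\le a(x,x)$, $a(x,y)\otimes a(y,z)\le a(x,z)$, $a(x,y)=a(y,x)$; with $\mathcal{V}$-functors ($a(x,y)\le b(fx,fy)$; initial if equality) they form $\mathbf{Cat}(\mathcal{V})_{\mathrm{sym}}$. $\mathcal{V}_s=(\mathcal{V},\hom_s)$ with $\hom_s(u,v)=\hom(u,v)\wedge\hom(v,u)$; $\mathcal{V}_s^n$ has $[f,g]=\bigwedge_i\hom_s(f(i),g(i))$. $\mathsf{G}$ is finitary if every $\mathfrak{x}\in\mathsf{G}X$ lies in the image of $\mathsf{G}m$ for some finite subset inclusion $m\colon A\to X$; $\mathsf{F}$ lifts $\mathsf{G}$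 if $|\mathsf{F}-|=\mathsf{G}|-|$. An $n$-ary predicate lifting for $\mathsf{F}$ is a natural transformation $\lambda\colon\mathbf{Cat}(\mathcal{V})_{\mathrm{sym}}(-,\mathcal{V}_s^n)\to\mathbf{Cat}(\mathcal{V})_{\mathrm{sym}}(\mathsf{F}-,\mathcal{V}_s)$. An $\mathsf{F}$-coalgebra $(X,a,\alpha)$ is a $\mathcal{V}$-functor $\alpha\colon(X,a)\to\mathsf{F}(X,a)$; a coalgebra morphism $f\colon(X,a,\alpha)\to(Y,b,\beta)$ is a $\mathcal{V}$-functor with $\beta f=\mathsf{F}f\cdot\alpha$. Behavioural distance: $bd^{\mathsf{F}}_\alpha(x,y)=\bigvee\{b(f(x),f(y))\mid f\colon(X,a,\alpha)\to(Y,b,\beta)\text{ coalgebra morphism}\}$. Formulas of $\mathcal{L}(\Lambda)$: $\phi::=\top\mid\phi_1\vee\phi_2\mid\phi_1\wedge\phi_2\mid u\otimes\phi\mid\hom_s(u,\phi)\mid\lambda(\phi_1,\dots,\phi_n)$ ($u\in\mathcal{V}$, $\lambda\in\Lambda$ $n$-ary). Semantics on $(X,a,\alpha)$ is a $\mathcal{V}$-functor $[\![\phi]\!]\colon(X,a)\to\mathcal{V}_s$: $[\![\top]\!]$ constantly $\top$; $\vee,\wedge,u\otimes-,\hom_s(u,-)$ interpreted pointwise in $\mathcal{V}$; $[\![\lambda(\phi_1,\dots,\phi_n)]\!]=\lambda_{(X,a)}(\langle[\![\phi_1]\!],\dots,[\![\phi_n]\!]\rangle)\cdot\alpha$. Logical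 distance: $ld^\Lambda_\alpha(x,y)=\bigwedge_{\phi\in\mathcal{L}(\Lambda)}\hom_s([\![\phi]\!](x),[\![\phi]\!](y))$. *)

From HB Require Import structures.
From mathcomp Require Import all_boot all_order.
From Stdlib Require Import ClassicalEpsilon List.
Set Implicit Arguments. Unset Strict Implicit. Unset Printing Implicit Defensive.
Import Order.Theory.
Local Open Scope order_scope.

Definition asb (P : Prop) : bool :=
  if excluded_middle_informative P then true else false.

Section Quantale.
Context {disp : Order.disp_t} {V : finTBLatticeType disp}.

Definition bigjoinP (P : V -> Prop) : V := \join_(v | asb (P v)) v.
Definition bigmeetP (P : V -> Prop) : V := \meet_(v | asb (P v)) v.

Definition is_quantale (tens : V -> V -> V) (k : V) : Prop :=
  [/\ (forall u v w, tens u (tens v w) = tens (tens u v) w),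
      (forall u v, tens u v = tens v u),
      (forall u, tens k u = u) &
      (forall u (A : {set V}), tens u (\join_(v in A) v) = \join_(v in A) tens u v)].

(* hom(u,-) : the right adjoint of u ⊗ - *)
Definition qhom (tens : V -> V -> V) (u v : V) : V := \join_(w | tens u w <= v) w.
Definition qhom_s tens (u v : V) : V := qhom tens u v `&` qhom tens v u.

(* the structure of V_s^n *)
Definition qhom_sn tens (n : nat) (f g : 'I_n -> V) : V :=
  \meet_(i < n) qhom_s tens (f i) (g i).

Definition is_symVcat (tens : V -> V -> V) (k : V) (X : Type) (a : X -> X -> V) : Prop :=
  [/\ (forall x, k <= a x x),
      (forall x y z, tens (a x y) (a y z) <= a x z) &
      (forall x y, a x y = a y x)].

Definition vfun (X Y : Type) (a : X -> X -> V) (b : Y -> Y -> V) (f : X -> Y) : Prop :=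
  forall x y, a x y <= b (f x) (f y).

Definition vinitial (X Y : Type) (a : X -> X -> V) (b : Y -> Y -> V) (f : X -> Y) : Prop :=
  forall x y, a x y = b (f x) (f y).

End Quantale.

Record setFunctor := SetFunctor {
  Gob : Type -> Type;
  Gmap : forall X Y : Type, (X -> Y) -> Gob X -> Gob Y;
  Gmap_id : forall X (u : Gob X), Gmap (fun x : X => x) u = u;
  Gmap_comp : forall X Y Z (f : X -> Y) (g : Y -> Z) (u : Gob X),
      Gmap (fun x => g (f x)) u = Gmap g (Gmap f u)
}.
Arguments Gmap G {X Y} f u : rename.

Definition finitary (G : setFunctor) : Prop :=
  forall (X : Type) (u : Gob G X), exists (s : list X) (w : Gob G {x : X | In x s}),
    Gmap G (@proj1_sig X (fun x => In x s)) w = u.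

Section Lifting.
Context {disp : Order.disp_t} {V : finTBLatticeType disp}.
Variables (tens : V -> V -> V) (k : V) (G : setFunctor).

(* Object part of a functor F on Cat(V)_sym with |F(X,a)| = G X; the
   morphism part is forced to be |F f| = G f. *)
Definition liftdata := forall X : Type, (X -> X -> V) -> Gob G X -> Gob G X -> V.

Definition is_lifting (F : liftdata) : Prop :=
  (forall X (a : X -> X -> V), is_symVcat tens k a -> is_symVcat tens k (F X a)) /\
  (forall X Y (a : X -> X -> V) (b : Y -> Y -> V) (f : X -> Y),
      is_symVcat tens k a -> is_symVcat tens k b -> vfun a b f ->
      vfun (F X a) (F Y b) (Gmap G f)).

Definition preserves_initial (F : liftdata) : Prop :=
  forall X Y (a : X -> X -> V) (b : Y -> Y -> V) (f : X -> Y),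
    is_symVcat tens k a -> is_symVcat tens k b -> vinitial a b f ->
    vinitial (F X a) (F Y b) (Gmap G f).

Definition predlift_fun (n : nat) :=
  forall X : Type, (X -> X -> V) -> (X -> 'I_n -> V) -> Gob G X -> V.

Definition is_predlift (F : liftdata) (n : nat) (lam : predlift_fun n) : Prop :=
  (forall X (a : X -> X -> V) (phi : X -> 'I_n -> V),
      is_symVcat tens k a -> vfun a (qhom_sn tens (n:=n)) phi ->
      vfun (F X a) (qhom_s tens) (lam X a phi)) /\
  (forall X Y (a : X -> X -> V) (b : Y -> Y -> V) (f : X -> Y) (phi : Y -> 'I_n -> V),
      is_symVcat tens k a -> is_symVcat tens k b -> vfun a b f ->
      vfun b (qhom_sn tens (n:=n)) phi ->
      forall u, lam X a (fun x => phi (f x)) u = lam Y b phi (Gmap G f u)).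

Definition is_coalg (F : liftdata) X (a : X -> X -> V) (alpha : X -> Gob G X) : Prop :=
  is_symVcat tens k a /\ vfun a (F X a) alpha.

Definition is_coalg_mor (F : liftdata) X Y (a : X -> X -> V) (alpha : X -> Gob G X)
  (b : Y -> Y -> V) (beta : Y -> Gob G Y) (f : X -> Y) : Prop :=
  vfun a b f /\ forall x, beta (f x) = Gmap G f (alpha x).

Definition bd (F : liftdata) X (a : X -> X -> V) (alpha : X -> Gob G X) (x y : X) : V :=
  bigjoinP (fun v => exists (Y : Type) (b : Y -> Y -> V) (beta : Y -> Gob G Y) (f : X -> Y),
     is_coalg F b beta /\ is_coalg_mor F a alpha b beta f /\ v = b (f x) (f y)).

Inductive formula (L : Type) (ar : L -> nat) : Type :=
  | fTop : formula ar
  | fOr : formula ar -> formula ar -> formula ar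
  | fAnd : formula ar -> formula ar -> formula ar
  | fTens : V -> formula ar -> formula ar
  | fHom : V -> formula ar -> formula ar
  | fLam : forall l : L, ('I_(ar l) -> formula ar) -> formula ar.

Fixpoint sem (L : Type) (ar : L -> nat) (lam : forall l, predlift_fun (ar l))
  X (a : X -> X -> V) (alpha : X -> Gob G X) (phi : formula ar) : X -> V :=
  match phi with
  | fTop => fun _ => \top
  | fOr p q => fun x => sem lam a alpha p x `|` sem lam a alpha q x
  | fAnd p q => fun x => sem lam a alpha p x `&` sem lam a alpha q x
  | fTens u p => fun x => tens u (sem lam a alpha p x)
  | fHom u p => fun x => qhom_s tens u (sem lam a alpha p x)
  | fLam l args => fun x =>
      lam l X a (fun z i => sem lam a alpha (args i) z) (alpha x)
  end.

Definition ld (L : Type) (ar : L -> nat) (lam : forall l, predlift_fun (ar l))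
  X (a : X -> X -> V) (alpha : X -> Gob G X) (x y : X) : V :=
  bigmeetP (fun v => exists phi : formula ar,
     v = qhom_s tens (sem lam a alpha phi x) (sem lam a alpha phi y)).

End Lifting.

From mathcomp Require Import all_boot all_order.
From Stdlib Require Import ClassicalEpsilon List.
Set Implicit Arguments. Unset Strict Implicit. Unset Printing Implicit Defensive.
Import Order.Theory.
Local Open Scope order_scope.

(* The predicate liftings are the evaluations
     lam_t(phi)(u) = F(V_s^n)(G phi u, t),   t in G(V^n).
   Logical distance ld is the initial structure on X for the cone of formula
   semantics X -> V_s, so it is a symmetric V-category structure above a, and it
   suffices that alpha : (X, ld) -> F(X, ld) is a V-functor: the identity is then
   a coalgebra morphism into (X, ld, alpha). Given x and y, finitarity puts
   alpha x and alpha y in the image of G A for a finite A in X. As V is finite,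
   finitely many formulas phi_1..phi_N realise ld on A, i.e.
   <phi_i> : (A, ld) -> V_s^N is initial; since F preserves initial morphisms,
   F(ld)(alpha x, alpha y) is the value at x of lam_t(phi_1..phi_N) for
   t = G<phi_i>(alpha y). That formula has value >= k at y, which bounds
   ld(x, y) by its value at x. *)

Lemma asbP (P : Prop) : reflect P (asb P).
Proof. by rewrite /asb; case: excluded_middle_informative => h; constructor. Qed.

Section Quantale.
Context {disp : Order.disp_t} {V : finTBLatticeType disp}.
Variables (tens : V -> V -> V) (k : V).
Hypothesis HQ : is_quantale tens k.

Lemma tensA u v w : tens u (tens v w) = tens (tens u v) w.
Proof. by case: HQ. Qed.

Lemma tensC u v : tens u v = tens v u.
Proof. by case: HQ. Qed.

Lemma tens1 u : tens k u = u.
Proof. by case: HQ. Qed.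

Lemma tens_joins u (A : {set V}) : tens u (\join_(v in A) v) = \join_(v in A) tens u v.
Proof. by case: HQ. Qed.

Lemma tensU u w1 w2 : tens u (w1 `|` w2) = tens u w1 `|` tens u w2.
Proof.
have join2 (h : V -> V) : \join_(v in [set w1; w2]) h v = h w1 `|` h w2.
  by rewrite joins_setU !big_set1.
by rewrite -[w1 `|` w2](join2 id) tens_joins join2.
Qed.

Lemma le_tensr u w1 w2 : w1 <= w2 -> tens u w1 <= tens u w2.
Proof. by move=> le12; rewrite -(join_r le12) tensU leUl. Qed.

Lemma le_tensl u w1 w2 : w1 <= w2 -> tens w1 u <= tens w2 u.
Proof. by move=> le12; rewrite tensC (tensC w2) le_tensr. Qed.

Lemma le_qhom u v w : (w <= qhom tens u v) = (tens u w <= v).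
Proof.
apply/idP/idP => [le_w|le_uw]; last by rewrite /qhom (joins_sup id).
apply: le_trans (le_tensr u le_w) _.
have -> : qhom tens u v = \join_(x in [set x | tens u x <= v]) x.
  by apply: eq_bigl => x; rewrite inE.
by rewrite tens_joins; apply/joinsP => x; rewrite inE.
Qed.

Lemma le_qhom_s u v w :
  (w <= qhom_s tens u v) = (tens u w <= v) && (tens v w <= u).
Proof. by rewrite lexI !le_qhom. Qed.

Lemma qhom_sC u v : qhom_s tens u v = qhom_s tens v u.
Proof. by rewrite /qhom_s meetC. Qed.

Lemma qhom_s_refl v : k <= qhom_s tens v v.
Proof. by rewrite le_qhom_s tensC tens1 lexx. Qed.

Lemma qhom_s_trans c d p q r : c <= qhom_s tens p q -> d <= qhom_s tens q r ->
  tens c d <= qhom_s tens p r.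
Proof.
rewrite !le_qhom_s => /andP[cpq cqp] /andP[dqr drq]; apply/andP; split.
  by rewrite tensA; apply: le_trans (le_tensl _ cpq) dqr.
by rewrite (tensC c) tensA; apply: le_trans (le_tensl _ drq) cqp.
Qed.

Lemma qhom_s_unit_le c p q : k <= q -> c <= qhom_s tens p q -> c <= p.
Proof.
move=> kq; rewrite le_qhom_s => /andP[_ cqp].
by apply: le_trans cqp; rewrite -{1}(tens1 c) le_tensl.
Qed.

Lemma qhom_s_join2 c p q p' q' : c <= qhom_s tens p q -> c <= qhom_s tens p' q' ->
  c <= qhom_s tens (p `|` p') (q `|` q').
Proof.
rewrite !le_qhom_s => /andP[h1 h2] /andP[h3 h4].
rewrite !(tensC _ c) !tensU !leUx !(tensC c).
by rewrite !(le_trans h1, le_trans h2, le_trans h3, le_trans h4) ?leUl ?leUr.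
Qed.

Lemma qhom_s_meet2 c p q p' q' : c <= qhom_s tens p q -> c <= qhom_s tens p' q' ->
  c <= qhom_s tens (p `&` p') (q `&` q').
Proof.
rewrite !le_qhom_s => /andP[h1 h2] /andP[h3 h4]; rewrite !lexI.
by rewrite (le_trans (le_tensl _ (leIl _ _)) h1) (le_trans (le_tensl _ (leIr _ _)) h3)
  (le_trans (le_tensl _ (leIl _ _)) h2) (le_trans (le_tensl _ (leIr _ _)) h4).
Qed.

Lemma qhom_s_tens c u p q : c <= qhom_s tens p q ->
  c <= qhom_s tens (tens u p) (tens u q).
Proof. by rewrite !le_qhom_s -!tensA => /andP[h1 h2]; rewrite !le_tensr. Qed.

Lemma qhom_s_qhom_s c u p q : c <= qhom_s tens p q ->
  c <= qhom_s tens (qhom_s tens u p) (qhom_s tens u q).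
Proof.
move=> cpq; have cqp : c <= qhom_s tens q p by rewrite qhom_sC.
by rewrite le_qhom_s !(qhom_s_trans (lexx _)).
Qed.

Lemma symVcat_qhom_sn n : is_symVcat tens k (qhom_sn tens (n:=n)).
Proof.
split=> [f | f g h | f g].
- by apply/meetsP => i _; apply: qhom_s_refl.
- apply/meetsP => i _; apply: qhom_s_trans;
  exact: (meets_inf (fun i => qhom_s tens _ _)).
- by apply: eq_bigr => i _; rewrite qhom_sC.
Qed.

Lemma symVcat_comp X Y (a : X -> X -> V) (f : Y -> X) :
  is_symVcat tens k a -> is_symVcat tens k (fun y y' => a (f y) (f y')).
Proof.
by case=> refl trans sym; split=> *; [apply: refl | apply: trans | apply: sym].
Qed.

Lemma vfun_representable X (a : X -> X -> V) (w : X) :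
  is_symVcat tens k a -> vfun a (qhom_s tens) (a^~ w).
Proof.
case=> _ trans sym x y; rewrite le_qhom_s.
by rewrite tensC [a x y]sym trans tensC [a y x]sym trans.
Qed.

End Quantale.

Section InitialDist.
Context {disp : Order.disp_t} {V : finTBLatticeType disp}.
Variables (tens : V -> V -> V) (k : V).
Hypothesis HQ : is_quantale tens k.
Variables (I X : Type) (f : I -> X -> V).

Definition initial_dist (x y : X) : V :=
  bigmeetP (fun v => exists i, v = qhom_s tens (f i x) (f i y)).

Lemma initial_dist_le i x y : initial_dist x y <= qhom_s tens (f i x) (f i y).
Proof. by apply: (meets_inf id); apply/asbP; exists i. Qed.

Lemma le_initial_dist c x y :
  (forall i, c <= qhom_s tens (f i x) (f i y)) -> c <= initial_dist x y.
Proof. by move=> le_c; apply/meetsP => _ /asbP[i ->]. Qed.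

Lemma symVcat_initial_dist : is_symVcat tens k initial_dist.
Proof.
split=> [x | x y z | x y].
- by apply: le_initial_dist => i; apply: qhom_s_refl.
- by apply: le_initial_dist => i; apply: (qhom_s_trans HQ); apply: initial_dist_le.
- by apply/le_anti; rewrite !le_initial_dist // => i; rewrite qhom_sC initial_dist_le.
Qed.

Lemma vfun_initial_dist (a : X -> X -> V) :
  (forall i, vfun a (qhom_s tens) (f i)) -> vfun a initial_dist (fun x => x).
Proof. by move=> f_vfun x y; apply: le_initial_dist => i; apply: f_vfun. Qed.

Lemma initial_dist_finite (T : finType) (e : T -> X) :
  exists N (g : 'I_N -> I), vinitial (fun t t' => initial_dist (e t) (e t'))
    (qhom_sn tens (n:=N)) (fun t n => f (g n) (e t)).
Proof.
pose attained (w : T * T * V) :=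
  exists i, w.2 = qhom_s tens (f i (e w.1.1)) (f i (e w.1.2)).
pose W := {w : T * T * V | asb (attained w)}.
pose realises (w : W) i :=
  (val w).2 = qhom_s tens (f i (e (val w).1.1)) (f i (e (val w).1.2)).
have [pick pickP] : exists pick : W -> I, forall w, realises w (pick w).
  by apply: (@fin_all_exists W (fun=> I) realises) => -[w /= att]; apply/asbP.
exists #|{: W}|, (fun n => pick (enum_val n)) => t t'; apply/le_anti/andP; split.
  by apply/meetsP => n _; apply: initial_dist_le.
apply/meetsP => _ /asbP[i ->].
have att : asb (attained (t, t', qhom_s tens (f i (e t)) (f i (e t')))).
  by apply/asbP; exists i.
pose w : W := exist _ (t, t', _) att.
by rewrite /qhom_sn (bigD1 (enum_rank w)) //= enum_rankK -(pickP w) leIl.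
Qed.

End InitialDist.

Lemma In_nth_ord (X : Type) (x0 : X) (s : list X) z :
  In z s -> exists i : 'I_(size s), seq.nth x0 s i = z.
Proof.
elim: s => [//|y s IH] /= [->|/IH[i <-]]; first by exists ord0.
by exists (lift ord0 i).
Qed.

Lemma initial_dist_finite_list {disp : Order.disp_t} {V : finTBLatticeType disp}
    (tens : V -> V -> V) (I X : Type) (f : I -> X -> V) (x0 : X) (s : list X) :
  exists N (g : 'I_N -> I),
    vinitial (fun p q : {x | In x s} => initial_dist tens f (proj1_sig p) (proj1_sig q))
      (qhom_sn tens (n:=N)) (fun p n => f (g n) (proj1_sig p)).
Proof.
have [N [g ini]] :=
  initial_dist_finite tens f (fun i : 'I_(size s) => seq.nth x0 s i).
exists N, g => -[x sx] [y sy] /=.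
by have [i <-] := In_nth_ord x0 sx; have [j <-] := In_nth_ord x0 sy; apply: ini.
Qed.

Lemma finitary_common_support (G : setFunctor) : finitary G ->
  forall X (u1 u2 : Gob G X), exists (s : list X) (w1 w2 : Gob G {x | In x s}),
    Gmap G (@proj1_sig X _) w1 = u1 /\ Gmap G (@proj1_sig X _) w2 = u2.
Proof.
move=> Gfin X u1 u2.
have [s1 [w1 <-]] := Gfin X u1; have [s2 [w2 <-]] := Gfin X u2.
pose s := (s1 ++ s2)%list.
pose incl s' (sub : forall x, In x s' -> In x s) (z : {x | In x s'}) :=
  exist (fun x => In x s) (proj1_sig z) (sub _ (proj2_sig z)).
exists s, (Gmap G (incl s1 (fun x h => in_or_app s1 s2 x (or_introl h))) w1),
  (Gmap G (incl s2 (fun x h => in_or_app s1 s2 x (or_intror h))) w2).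
by rewrite -!Gmap_comp.
Qed.

Unset Implicit Arguments.

Section Logic.
Context {disp : Order.disp_t} {V : finTBLatticeType disp}.
Variables (tens : V -> V -> V) (k : V) (G : setFunctor) (F : @liftdata _ V G).
Hypothesis HQ : is_quantale tens k.

Section Semantics.
Variables (L : Type) (ar : L -> nat) (lam : forall l, @predlift_fun _ V G (ar l)).
Hypothesis lam_predlift : forall l, is_predlift tens k F (lam l).
Variables (X : Type) (a : X -> X -> V) (alpha : X -> Gob G X).
Hypothesis alpha_coalg : is_coalg tens k F a alpha.

Lemma vfun_sem phi : vfun a (qhom_s tens) (sem tens lam a alpha phi).
Proof.
elim: phi => [|p IHp q IHq|p IHp q IHq|u p IHp|u p IHp|l args IH] x y /=.
- by rewrite (le_qhom_s HQ) !lex1.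
- exact: (qhom_s_join2 HQ).
- exact: (qhom_s_meet2 HQ).
- exact: (qhom_s_tens HQ).
- exact: (qhom_s_qhom_s HQ).
- apply: le_trans (proj2 alpha_coalg x y) _.
  apply: (proj1 (lam_predlift l)) (proj1 alpha_coalg) _ _ _ => z z'.
  by apply/meetsP => i _; apply: IH.
Qed.

Lemma ldE : ld tens lam a alpha = initial_dist tens (sem tens lam a alpha).
Proof. by []. Qed.

End Semantics.

Definition eval_symbol := {n : nat & Gob G ('I_n -> V)}.

Definition eval_lifting (t : eval_symbol) : @predlift_fun _ V G (projT1 t) :=
  fun X a phi u => F _ (qhom_sn tens (n:=projT1 t)) (Gmap G phi u) (projT2 t).

Hypothesis HF : is_lifting tens k F.

Lemma eval_lifting_predlift t : is_predlift tens k F (eval_lifting t).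
Proof.
have Vsn := symVcat_qhom_sn HQ (projT1 t).
split=> [X a phi Ha phi_vfun u u' | X Y a b f phi _ _ _ _ u].
  apply: le_trans (proj2 HF _ _ _ _ _ Ha Vsn phi_vfun u u') _.
  exact: (vfun_representable HQ _ (proj1 HF _ _ Vsn)).
by rewrite /eval_lifting Gmap_comp.
Qed.

Lemma coalg_dist_le_bd X (a d : X -> X -> V) (alpha : X -> Gob G X) :
  is_coalg tens k F d alpha -> vfun a d (fun z => z) ->
  forall x y, d x y <= bd tens k F a alpha x y.
Proof.
move=> d_coalg a_le_d x y; apply: (joins_sup id); apply/asbP.
exists X, d, alpha, (fun z => z); do 2!split=> //.
by split=> // z; rewrite Gmap_id.
Qed.

Hypothesis Hinit : preserves_initial tens k F.
Hypothesis Gfin : finitary G.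

Lemma vfun_coalg_ld X (a : X -> X -> V) (alpha : X -> Gob G X) :
  is_coalg tens k F a alpha ->
  vfun (ld tens eval_lifting a alpha) (F X (ld tens eval_lifting a alpha)) alpha.
Proof.
move=> alpha_coalg x y.
set d := ld tens eval_lifting a alpha; set sem_a := sem tens eval_lifting a alpha.
have d_sym : is_symVcat tens k d := symVcat_initial_dist HQ sem_a.
have [s [w1 [w2 [alpha_x alpha_y]]]] :=
  finitary_common_support Gfin (alpha x) (alpha y).
have [N [phis Phi_ini]] := initial_dist_finite_list tens sem_a x s.
pose Phi (p : {z | In z s}) n := sem_a (phis n) (proj1_sig p).
have d_s_sym := symVcat_comp (proj1_sig (P := fun z => In z s)) d_sym.
have Vsn := symVcat_qhom_sn HQ N.
have F_alpha : F X d (alpha x) (alpha y) =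
    F _ (qhom_sn tens (n:=N)) (Gmap G Phi w1) (Gmap G Phi w2).
  rewrite -alpha_x -alpha_y -(Hinit _ _ _ _ _ d_s_sym d_sym (fun p q => erefl)).
  exact: Hinit _ _ _ _ _ d_s_sym Vsn Phi_ini w1 w2.
pose psi := fLam (l := existT _ N (Gmap G Phi w2) : eval_symbol) phis.
have sem_psi z : sem_a psi z = F _ (qhom_sn tens (n:=N))
    (Gmap G (fun z n => sem_a (phis n) z) (alpha z)) (Gmap G Phi w2).
  by [].
have k_le_psi_y : k <= sem_a psi y.
  rewrite sem_psi -alpha_y -Gmap_comp.
  by case: (proj1 HF _ _ Vsn) => F_refl _ _; apply: F_refl.
apply: le_trans (qhom_s_unit_le HQ k_le_psi_y (initial_dist_le tens sem_a psi x y)) _.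
by rewrite sem_psi F_alpha -alpha_x -Gmap_comp.
Qed.

End Logic.

Theorem corollary4 (disp : Order.disp_t) (V : finTBLatticeType disp)
  (tens : V -> V -> V) (k : V)
  (HQ : is_quantale tens k) (Hnontriv : (\bot : V) != \top)
  (G : setFunctor) (Hfin : finitary G)
  (F : @liftdata _ V G) (HF : is_lifting tens k F)
  (Hinit : preserves_initial tens k F) :
  exists (L : Type) (ar : L -> nat) (lam : forall l, @predlift_fun _ V G (ar l)),
    (forall l, is_predlift tens k F (lam l)) /\
    (forall (X : Type) (a : X -> X -> V) (alpha : X -> Gob G X),
       is_coalg tens k F a alpha ->
       forall x y : X, ld tens lam a alpha x y <= bd tens k F a alpha x y).
Proof.
have lam_predlift := eval_lifting_predlift tens k G F HQ HF.
exists (eval_symbol G), (fun t => projT1 t), (eval_lifting tens G F).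
split=> // X a alpha alpha_coalg.
apply: coalg_dist_le_bd; first split.
- exact: symVcat_initial_dist.
- exact: (vfun_coalg_ld tens k G F HQ HF Hinit Hfin).
- rewrite ldE; apply: vfun_initial_dist => phi.
  exact: (vfun_sem tens k G F HQ _ _ _ lam_predlift _ _ _ alpha_coalg).
Qed.
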